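(* Assume $d_0\delta>2$, and let $\varepsilon_0=\frac{d_0}2-\frac1\delta>0$ and $t=\frac{d_0}{2}$. Let $G=(L\cup R,E)$ be a $(c,d,\alpha,\delta)$-bipartite expander with $L=[n]$, $C_0\subseteq\mathbb{F}_2^d$ a linear code of minimum distance $d_0$, and $x\in\mathbb{F}_2^n$, $y\in T(G,C_0)$ with $d_H(x,y)\le\alpha n$. Then there exists $q\in W\setminus\{0\}$ such that, with $x'=\mathsf{DeterFlip}(x,q)$, $|F(x',y)|\le\left(1-\frac{\varepsilon_0\delta}{2ct^2}\right)|F(x,y)|$.
   Context: A bipartite graph is $(c,d)$-regular if left degrees are $c$ and right degrees $d$; $N(S)$ is the neighborhood of $S$. A $(c,d,\alpha,\delta)$-bipartite expander ($\alpha,\delta\in(0,1]$) is a $(c,d)$-regular bipartite graph with $|N(S)|\ge\delta c|S|$ for all $S\subseteq L$, $|S|\le\alpha|L|$. Tanner code: $L=[n]$, for each $v\in R$ a fixed ordering of $N(v)$ defines $x_{N(v)}\in\mathbb{F}_2^d$, and $T(G,C_0)=\{x:x_{N(v)}\in C_0\ \forall v\in R\}$. $F(x,y)=\{i\in[n]:x_i\ne y_i\}$; $d_H$ is Hamming distance. $\mathsf{Decode}(z)$ is the codeword of $C_0$ closest to $z\in\mathbb{F}_2^d$, ties broken lexicographically. $W=\{\frac{i}{cd_0}:i\in\mathbb{Z},0\le i\le cd_0\}$. $\mathsf{DeterFlip}(x,q)$ for $q\in\mathbb{R}$: set $p_1=\dots=p_n=0$; for each $v\in R$, let $w_v=\mathsf{Decode}(x_{N(v)})$;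 if $1\le d_H(w_v,x_{N(v)})<t$, let $i$ be the smallest element of $N(v)$ where $w_v$ and $x_{N(v)}$ differ and increase $p_i$ by $\frac{t-d_H(w_v,x_{N(v)})}{ct}$; then flip every $x_i$ with $p_i=q$ and return the result. *)

(* Words over F_2 are represented as finite functions to bool
   (F_2 = bool with xor (+) as addition). *)
From mathcomp Require Import all_boot all_order all_algebra.
Set Implicit Arguments. Unset Strict Implicit. Unset Printing Implicit Defensive.
Import Order.TTheory GRing.Theory Num.Theory.
Local Open Scope ring_scope.

Definition word (k : nat) := {ffun 'I_k -> bool}.

Definition dH k (x y : word k) : nat := #|[set j | x j != y j]|.

Definition Fset k (x y : word k) : {set 'I_k} := [set i | x i != y i].

Definition wxor k (x y : word k) : word k := [ffun j => x j (+) y j].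
Definition zero_word k : word k := [ffun _ => false].

Definition linear_code k (C : {set word k}) : Prop :=
  zero_word k \in C /\ (forall x y, x \in C -> y \in C -> wxor x y \in C).

Definition min_distance k (C : {set word k}) (d0 : nat) : Prop :=
  (exists x y, [/\ x \in C, y \in C, x != y & dH x y = d0]) /\
  (forall x y, x \in C -> y \in C -> x != y -> (d0 <= dH x y)%N).

Definition lexlt k (x y : word k) : bool :=
  [exists j : 'I_k, ((x j : nat) < y j)%N &&
                    [forall j' : 'I_k, (j' < j)%N ==> (x j' == y j')]].
Definition lexle k (x y : word k) : bool := (x == y) || lexlt x y.

(* Decode(z): closest codeword of C to z, ties broken lexicographically
   (default 0 if C is empty, which never happens for a linear code) *)
Definition Decode k (C : {set word k}) (z : word k) : word k :=
  odflt (zero_word k)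
    [pick w in C | [forall w' in C,
        (dH z w < dH z w')%N || ((dH z w == dH z w') && lexle w w')]].

(* Bipartite graph with L = [n], R = [m]; N v is the fixed ordering of the
   neighbourhood of the right vertex v. *)
Section Graph.
Variables (n m d : nat) (N : 'I_m -> d.-tuple 'I_n).

Definition restrict (x : word n) (v : 'I_m) : word d :=
  [ffun j => x (tnth (N v) j)].

Definition regular (c : nat) : Prop :=
  (forall v, uniq (N v)) /\ (forall i : 'I_n, #|[set v | i \in N v]| = c).

Definition nbhd (S : {set 'I_n}) : {set 'I_m} :=
  [set v | [exists j, tnth (N v) j \in S]].

Definition expander (R : realFieldType) (c : nat) (alpha delta : R) : Prop :=
  [/\ regular c, 0 < alpha <= 1, 0 < delta <= 1 &
      forall S : {set 'I_n}, #|S|%:R <= alpha * n%:R ->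
        delta * c%:R * #|S|%:R <= (#|nbhd S|%:R : R)].

Definition tanner (C : {set word d}) : {set word n} :=
  [set x : word n | [forall v, restrict x v \in C]].

Definition DeterFlip (R : realFieldType) (c : nat) (t : R) (C : {set word d})
    (x : word n) (q : R) : word n :=
  let w v := Decode C (restrict x v) in
  let e v := dH (w v) (restrict x v) in
  let D v := [set i : 'I_n | [exists j, (tnth (N v) j == i) && (w v j != x i)]] in
  let first v := [pick i in D v | [forall i' in D v, (i <= i')%N]] in
  let p i := \sum_(v : 'I_m | (1 <= e v)%N && ((e v)%:R < t) && (first v == Some i))
               (t - (e v)%:R) / (c%:R * t) in
  [ffun i => if p i == q then ~~ x i else x i].

End Graph.

(* A right vertex v whose decoded word w_v is at distance e_v in [1, t) from x_{N(v)} votes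
   (t - e_v)/(ct) for the first position where they differ; p_i is the total vote of position i.
   Flipping the positions with p_i = q lowers |F| by g(q), the number of errors minus the number
   of correct positions among them, so the potential sum_i +-p_i (+ on errors) equals
   sum_q q g(q).  A check seeing f_v > 0 errors contributes at least (t - f_v)/(ct) to it: if w_v
   is the restriction of y its vote hits an error, otherwise d_0 <= e_v + f_v.  Double counting and
   expansion bound the potential below by (delta - 1/t)|F|, and since every p_i lies in W, one of
   the c d_0 nonzero values q has g(q) >= eps0 delta/(2 c t^2) |F|. *)

From mathcomp Require Import all_boot all_order all_algebra.
From mathcomp Require Import ring lra.
Import Order.TTheory GRing.Theory Num.Theory.
Set Implicit Arguments. Unset Strict Implicit. Unset Printing Implicit Defensive.

Lemma pick_min_total (T : finType) (le : rel T) (A : {set T}) :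
  transitive le -> total le -> A != set0 ->
  exists2 a, [pick a in A | [forall b in A, le a b]] = Some a
           & a \in A /\ forall b, b \in A -> le a b.
Proof.
move=> le_tr le_tot /set0Pn[a0 a0A].
case: pickP => [a /andP[aA /forallP a_min] | no_min].
  by exists a; split=> // b; apply/implyP/a_min.
have mem_sort b : (b \in sort le (enum A)) = (b \in A).
  by rewrite (perm_mem (permEl (perm_sort le _))) mem_enum.
have := sort_sorted le_tot (enum A); have := mem_sort a0.
case: (sort le (enum A)) mem_sort => [|a s] mem_sort; first by rewrite a0A.
move=> _ /(order_path_min le_tr)/allP a_min.
have /negP[] := negbT (no_min a); rewrite -mem_sort mem_head /=.
apply/forallP => b; apply/implyP; rewrite -mem_sort inE => /predU1P[->|/a_min //].
by have := le_tot a a; rewrite orbb.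
Qed.

Section Hamming.
Variable k : nat.
Implicit Types a b z : word k.

Lemma dH_sym a b : dH a b = dH b a.
Proof. by apply: eq_card => j; rewrite !inE eq_sym. Qed.

Lemma dH_eq0 a b : (dH a b == 0%N) = (a == b).
Proof.
rewrite cards_eq0; apply/eqP/eqP => [ab0|->]; last by apply/setP => j; rewrite !inE eqxx.
apply/ffunP => j; apply/eqP/negPn/negP => abj.
by have := in_set0 j; rewrite -ab0 inE abj.
Qed.

Lemma dH_triangle a b z : (dH a z <= dH a b + dH b z)%N.
Proof.
apply: leq_trans (leq_card_setU _ _); apply: subset_leq_card.
by apply/subsetP => j; rewrite !inE; case: (a j); case: (b j); case: (z j).
Qed.

Lemma lexlt_trans b a z : lexlt a b -> lexlt b z -> lexlt a z.
Proof.
move=> /existsP[j1 /andP[l1 /forallP H1]] /existsP[j2 /andP[l2 /forallP H2]].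
apply/existsP; case: (ltngtP j1 j2) => j12.
- exists j1; apply/andP; split; first by move: (H2 j1); rewrite j12 => /eqP <-.
  apply/forallP => j; apply/implyP => jj1.
  by move: (H1 j) (H2 j); rewrite jj1 (ltn_trans jj1 j12) => /eqP ->.
- exists j2; apply/andP; split; first by move: (H1 j2); rewrite j12 => /eqP ->.
  apply/forallP => j; apply/implyP => jj2.
  by move: (H1 j) (H2 j); rewrite jj2 (ltn_trans jj2 j12) => /eqP ->.
- have j1j2 : j1 = j2 by apply: val_inj.
  by move: l1 l2; rewrite j1j2; case: (a j2); case: (b j2); case: (z j2).
Qed.

Lemma lexlt_total a b : a != b -> lexlt a b || lexlt b a.
Proof.
move=> ab; have [j0 abj0] : exists j, a j != b j.
  by apply/existsP; apply: contraR ab => /existsPn ab; apply/eqP/ffunP => j; apply/eqP/negPn.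
case: (@arg_minnP _ j0 (fun j => a j != b j) (fun j : 'I_k => nat_of_ord j) abj0) => j abj j_min.
have agree_below : [forall j' : 'I_k, (j' < j)%N ==> (a j' == b j')].
  apply/forallP => j'; apply/implyP => j'j; apply/negPn/negP => /j_min.
  by rewrite leqNgt j'j.
have agree_below' : [forall j' : 'I_k, (j' < j)%N ==> (b j' == a j')].
  by apply/forallP => j'; rewrite eq_sym; apply: (forallP agree_below).
move: abj; case aj: (a j); case bj: (b j) => //= _.
- by apply/orP; right; apply/existsP; exists j; rewrite aj bj agree_below'.
- by apply/orP; left; apply/existsP; exists j; rewrite aj bj agree_below.
Qed.

Lemma lexle_trans : transitive (@lexle k).
Proof.
move=> b a z /predU1P[->//|ab] /predU1P[<-|bz]; first by rewrite /lexle ab orbT.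
by rewrite /lexle (lexlt_trans ab bz) orbT.
Qed.

Lemma lexle_total : total (@lexle k).
Proof.
move=> a b; rewrite /lexle; have [//|ab] := eqVneq a b.
by case/orP: (lexlt_total ab) => ->; rewrite ?orbT.
Qed.

Lemma Decode_spec (C : {set word k}) z : C != set0 ->
  Decode C z \in C /\ forall w, w \in C -> (dH z (Decode C z) <= dH z w)%N.
Proof.
move=> C_neq0.
pose le a b := (dH z a < dH z b)%N || ((dH z a == dH z b) && lexle a b).
have le_tr : transitive le.
  move=> b a c; rewrite /le => /orP[ab|/andP[/eqP-> ab]] /orP[bc|/andP[/eqP<- bc]].
  - by rewrite (ltn_trans ab bc).
  - by rewrite ab.
  - by rewrite bc.
  - by rewrite eqxx (lexle_trans ab bc) orbT.
have le_tot : total le.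
  by move=> a b; rewrite /le; case: ltngtP => //= _; apply: lexle_total.
have [a Da [aC a_min]] := pick_min_total le_tr le_tot C_neq0.
rewrite /Decode Da; split=> // w /a_min /orP[/ltnW //|/andP[/eqP-> _]] //.
Qed.

End Hamming.

Local Open Scope ring_scope.

Definition err_sign (R : pzRingType) k (x y : word k) (i : 'I_k) : R :=
  if i \in Fset x y then 1 else -1.

Lemma natr_card (R : pzSemiRingType) (T : finType) (A : {set T}) :
  #|A|%:R = \sum_i (i \in A)%:R :> R.
Proof.
rewrite -sum1_card natr_sum big_mkcond; apply: eq_bigr => i _.
by case: (i \in A).
Qed.

Lemma card_Fset_flip (R : pzRingType) k (x y : word k) (P : pred 'I_k) :
  #|Fset [ffun i => if P i then ~~ x i else x i] y|%:R
    = #|Fset x y|%:R - \sum_(i | P i) err_sign R x y i.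
Proof.
rewrite !natr_card (big_mkcond P) -sumrB; apply: eq_bigr => i _.
rewrite /err_sign !inE ffunE.
by case: (P i); case: (x i); case: (y i); rewrite /= ?subr0 ?opprK ?subrr ?add0r.
Qed.

Lemma sum_by_level (R : pzRingType) (I : finType) (M : nat) (K : I -> nat) (s : I -> R) :
  (forall i, K i <= M)%N ->
  \sum_i s i * (K i)%:R = \sum_(k < M.+1) k%:R * \sum_(i | K i == k) s i.
Proof.
move=> K_le; rewrite (partition_big (fun i => inord (K i) : 'I_M.+1) predT) //=.
apply: eq_bigr => k _; rewrite mulr_sumr; apply: eq_big => [i|i /eqP <-].
  by rewrite -val_eqE /= inordK // ltnS.
by rewrite inordK ?ltnS // mulr_natl mulr_natr.
Qed.

Lemma exists_level_ge (R : realDomainType) (M : nat) (G : nat -> R) (b : R) :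
  (0 < M)%N -> 0 <= b -> (M ^ 2)%:R * b <= \sum_(k < M.+1) k%:R * G k ->
  exists2 k, (1 <= k <= M)%N & b <= G k.
Proof.
move=> M_gt0 b_ge0 sum_ge.
have [/existsP[k /andP[k_gt0 bG]]|/existsPn no_level] :=
  boolP [exists k : 'I_M.+1, (0 < k)%N && (b <= G k)].
  by exists k => //; rewrite k_gt0 -ltnS ltn_ord.
have G_lt k : (1 <= k <= M)%N -> k%:R * G k < M%:R * b.
  move=> /andP[k_ge1 k_leM]; have Gk : G k < b.
    by have := no_level (Ordinal (k_leM : (k < M.+1)%N)); rewrite /= k_ge1 ltNge.
  move: k_ge1 k_leM; rewrite -(ler_nat R) -(ler_nat R); nra.
exfalso; move: sum_ge; apply/negP.
rewrite -ltNge big_ord_recl mul0r add0r.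
apply: (@lt_le_trans _ _ (\sum_(k < M) M%:R * b)).
  apply: ltr_sum => [|k _]; first by apply/hasP; exists (Ordinal M_gt0); rewrite ?mem_index_enum.
  by apply: G_lt => /=; exact: ltn_ord.
by rewrite big_const_ord iter_addr addr0 natrX expr2 -mulrA [X in _ <= X]mulr_natl.
Qed.

Section DeterFlipProgress.
Variables (R : realFieldType) (n m c d d0 : nat) (N : 'I_m -> d.-tuple 'I_n).
Variables (C0 : {set word d}) (x y : word n).
Hypotheses (c_gt0 : (0 < c)%N) (d0_gt0 : (0 < d0)%N) (N_reg : regular N c).
Hypothesis C0_neq0 : C0 != set0.
Hypothesis C0_dist : forall a b, a \in C0 -> b \in C0 -> a != b -> (d0 <= dH a b)%N.
Hypothesis y_code : y \in tanner N C0.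

Local Notation xv v := (restrict N x v).
Local Notation yv v := (restrict N y v).
Local Notation w v := (Decode C0 (xv v)).
Local Notation e v := (dH (w v) (xv v)).
Local Notation f v := (dH (xv v) (yv v)).
Local Notation Dv v := [set i : 'I_n | [exists j, (tnth (N v) j == i) && (w v j != x i)]].
Local Notation first v := [pick i in Dv v | [forall i' in Dv v, (i <= i')%N]].
Local Notation t := (d0%:R / 2 : R).
Local Notation active v := ((1 <= e v)%N && ((e v)%:R < t)).
Local Notation weight v := ((t - (e v)%:R) / (c%:R * t)).
Local Notation p i := (\sum_(v | active v && (first v == Some i)) weight v).
Local Notation F := (Fset x y).
Local Notation s i := (err_sign R x y i).
Local Notation contrib v :=
  (if active v then (if first v is Some i then s i else 0) * weight v else 0).
Local Notation level i := (\sum_(v | active v && (first v == Some i)) (d0 - 2 * e v))%N.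

Lemma DeterFlipE q : DeterFlip N c t C0 x q = [ffun i => if p i == q then ~~ x i else x i].
Proof. by []. Qed.

Lemma c_neq0 : c%:R != 0 :> R.
Proof. by rewrite pnatr_eq0 -lt0n. Qed.

Lemma d0_neq0 : d0%:R != 0 :> R.
Proof. by rewrite pnatr_eq0 -lt0n. Qed.

Lemma t_gt0 : 0 < t.
Proof. by rewrite divr_gt0 ?ltr0n. Qed.

Lemma restrict_y_code v : yv v \in C0.
Proof. by move: y_code; rewrite inE => /forallP. Qed.

Lemma decode_err_le v : (e v <= f v)%N.
Proof.
have [_ w_min] := Decode_spec (xv v) C0_neq0.
by rewrite dH_sym; apply/w_min/restrict_y_code.
Qed.

Lemma decode_miss v : w v != yv v -> (d0 <= e v + f v)%N.
Proof.
move=> wy; have [wC _] := Decode_spec (xv v) C0_neq0.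
exact: leq_trans (C0_dist wC (restrict_y_code v) wy) (dH_triangle _ _ _).
Qed.

Lemma first_in v i : first v = Some i -> i \in Dv v.
Proof. by case: pickP => // i' /andP[i'D _] [<-]. Qed.

Lemma first_some v : (0 < e v)%N -> exists i, first v = Some i.
Proof.
rewrite card_gt0 => /set0Pn[j]; rewrite inE ffunE => wxj.
have Dv_neq0 : Dv v != set0.
  by apply/set0Pn; exists (tnth (N v) j); rewrite inE; apply/existsP; exists j; rewrite eqxx.
have le_tr : transitive (fun a b : 'I_n => (a <= b)%N) by move=> i1 i2 i3; apply: leq_trans.
have le_tot : total (fun a b : 'I_n => (a <= b)%N) by move=> a b; apply: leq_total.
by have [i Ei _] := pick_min_total le_tr le_tot Dv_neq0; exists i.
Qed.

Lemma contrib_eq0 v : f v = 0%N -> contrib v = 0.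
Proof.
move=> f0; suff -> : e v = 0%N by [].
by apply/eqP; rewrite -leqn0 -f0 decode_err_le.
Qed.

Lemma inactive_f_ge v : (0 < f v)%N -> ~~ active v -> t <= (f v)%:R.
Proof.
move=> f_gt0; rewrite negb_and -ltnNge ltnS leqn0 -leNgt => /orP[e0|t_le_e].
  have wx : w v = xv v by apply/eqP; rewrite -dH_eq0.
  have wy : w v != yv v by apply: contraTneq f_gt0 => wy; rewrite -wy wx lt0n dH_eq0 eqxx.
  have : 0 <= d0%:R :> R by rewrite ler0n.
  have := decode_miss wy; rewrite (eqP e0) add0n -(ler_nat R); lra.
by apply: le_trans t_le_e _; rewrite ler_nat decode_err_le.
Qed.

Lemma contrib_ge v : (0 < f v)%N -> (t - (f v)%:R) / (c%:R * t) <= contrib v.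
Proof.
move=> f_gt0; have ct_gt0 : 0 < c%:R * t by rewrite mulr_gt0 ?ltr0n ?t_gt0.
have [act|inact] := boolP (active v); last first.
  by rewrite pmulr_lle0 ?invr_gt0 // subr_le0 inactive_f_ge.
have [i Ei] := first_some (proj1 (andP act)); rewrite Ei.
have weight_ge0 : 0 <= weight v.
  by case/andP: act => _ e_lt_t; rewrite divr_ge0 ?subr_ge0 ?ltW.
have [wy|wy] := eqVneq (w v) (yv v).
  have iF : i \in F.
    move: (first_in Ei); rewrite inE => /existsP[j /andP[/eqP <-]].
    by rewrite wy ffunE inE eq_sym.
  by rewrite /err_sign iF mul1r wy dH_sym.
(* A wrong decoding costs at most its own weight, and d0 <= e + f bounds that loss. *)
have := decode_miss wy; rewrite -(ler_nat R) natrD => d0_le_ef.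
apply: (@le_trans _ _ (- weight v)).
  by rewrite -mulNr ler_pM2r ?invr_gt0 //; lra.
rewrite /err_sign; case: (i \in F); rewrite ?mul1r ?mulN1r //.
by move: weight_ge0; lra.
Qed.

Lemma sum_sign_weight : \sum_i s i * p i = \sum_v contrib v.
Proof.
under eq_bigr => i _ do rewrite big_distrr /= big_mkcond /=.
rewrite exchange_big /=; apply: eq_bigr => v _.
case: (active v) => /=; last by rewrite big1.
case: (first v) => [i0|]; last by rewrite mul0r big1.
rewrite (bigD1 i0) //= eqxx big1 ?addr0 // => i i_neq.
by case: eqP => // -[i0E]; rewrite i0E eqxx in i_neq.
Qed.

Lemma f_count v : f v = (\sum_(i in N v) (i \in F))%N.
Proof.
rewrite -big_uniq; last by case: N_reg.
rewrite /dH -sum1dep_card big_tuple big_mkcond /=; apply: eq_bigr => j _.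
by rewrite !ffunE inE.
Qed.

Lemma sum_f : (\sum_v f v)%N = (c * #|F|)%N.
Proof.
under eq_bigr => v _ do rewrite f_count big_mkcond /=.
rewrite exchange_big /= -sum1_card big_distrr /= [RHS]big_mkcond /=; apply: eq_bigr => i _.
case: (i \in F); last by rewrite big1 // => v _; case: (_ \in _).
case: N_reg => _ /(_ i) <-.
by rewrite muln1 -sum1dep_card [RHS]big_mkcond; apply: eq_bigr => v _; case: (_ \in _).
Qed.

Lemma nbhd_F : nbhd N F = [set v | 0 < f v]%N.
Proof.
apply/setP => v; rewrite !inE card_gt0.
by apply/existsP/set0Pn => -[j]; rewrite !inE ?ffunE => ?; exists j; rewrite !inE ?ffunE.
Qed.

Lemma sum_sign_weight_ge :
  (t * #|nbhd N F|%:R - (c * #|F|)%:R) / (c%:R * t) <= \sum_i s i * p i.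
Proof.
rewrite sum_sign_weight (bigID (fun v => 0 < f v)%N) /= [X in _ <= _ + X]big1 ?addr0;
  last by move=> v; rewrite lt0n negbK => /eqP/contrib_eq0.
apply: le_trans (ler_sum _ (fun v => @contrib_ge v)).
have sum_t : \sum_(v | (0 < f v)%N) t = t * #|nbhd N F|%:R.
  rewrite nbhd_F natr_card mulr_sumr big_mkcond; apply: eq_bigr => v _.
  by rewrite inE; case: (0 < f v)%N; rewrite ?mulr1 ?mulr0.
have sum_f_pos : \sum_(v | (0 < f v)%N) (f v)%:R = (c * #|F|)%:R :> R.
  rewrite -sum_f natr_sum [RHS](bigID (fun v => 0 < f v)%N) /=.
  by rewrite [X in _ = _ + X]big1 ?addr0 // => v; rewrite lt0n negbK => /eqP ->.
by rewrite -mulr_suml sumrB sum_t sum_f_pos.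
Qed.

Lemma p_level i : p i = (level i)%:R / (c * d0)%:R.
Proof.
rewrite natr_sum mulr_suml; apply: eq_bigr => v /andP[/andP[_ e_lt_t] _].
have two_e_le : (2 * e v <= d0)%N.
  by rewrite -(ler_nat R) natrM ltW //; move: e_lt_t; rewrite ltr_pdivlMr ?ltr0n // mulrC.
by rewrite natrB // !natrM; field; rewrite c_neq0 d0_neq0.
Qed.

Lemma level_le i : (level i <= c * d0)%N.
Proof.
apply: (@leq_trans (\sum_(v | active v && (first v == Some i)) d0)).
  by apply: leq_sum => v _; exact: leq_subr.
rewrite sum_nat_cond_const leq_mul2r; apply/orP; right.
case: N_reg => _ /(_ i) <-; apply: subset_leq_card; apply/subsetP => v.
rewrite !inE => /andP[_ /eqP/first_in]; rewrite inE => /existsP[j /andP[/eqP <- _]].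
exact: mem_tnth.
Qed.

Lemma sum_sign_weight_expander (delta : R) :
  delta * c%:R * #|F|%:R <= #|nbhd N F|%:R ->
  (d0%:R * delta - 2) / d0%:R * #|F|%:R <= \sum_i s i * p i.
Proof.
move=> expand; apply: le_trans sum_sign_weight_ge.
set NF := #|nbhd N F|%:R; set nF := #|F|%:R.
have -> : (d0%:R * delta - 2) / d0%:R * nF
          = (d0%:R * (delta * c%:R * nF) - 2 * c%:R * nF) / (c%:R * d0%:R).
  by field; rewrite c_neq0 d0_neq0.
have -> : (t * NF - (c * #|F|)%:R) / (c%:R * t)
          = (d0%:R * NF - 2 * c%:R * nF) / (c%:R * d0%:R).
  by rewrite natrM; field; rewrite c_neq0 d0_neq0.
by rewrite ler_pM2r ?invr_gt0 ?mulr_gt0 ?ltr0n // lerD2r ler_wpM2l ?ler0n.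
Qed.

Lemma sum_sign_level : \sum_i s i * (level i)%:R = (\sum_i s i * p i) * (c * d0)%:R.
Proof.
rewrite mulr_suml; apply: eq_bigr => i _.
by rewrite p_level mulrA divfK // natrM mulf_neq0 ?c_neq0 ?d0_neq0.
Qed.

Lemma DeterFlip_progress (alpha delta : R) :
  expander N c alpha delta -> 2 < d0%:R * delta -> (dH x y)%:R <= alpha * n%:R ->
  exists2 k, (1 <= k <= c * d0)%N &
    #|Fset (DeterFlip N c t C0 x (k%:R / (c * d0)%:R)) y|%:R
      <= (1 - (d0%:R / 2 - delta^-1) * delta / (2 * c%:R * t ^+ 2)) * #|F|%:R.
Proof.
case=> _ _ /andP[delta_gt0 _] expand d0_delta dist.
set rate := _ * delta / _.
have M_gt0 : (0 < c * d0)%N by rewrite muln_gt0 c_gt0.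
have rate_level : (c * d0)%:R * rate = (d0%:R * delta - 2) / d0%:R.
  by rewrite /rate natrM; field; rewrite c_neq0 d0_neq0 gt_eqF.
have rateF_ge0 : 0 <= rate * #|F|%:R.
  have M_pos : 0 < (c * d0)%:R :> R by rewrite ltr0n.
  rewrite mulr_ge0 ?ler0n // -(pmulr_rge0 _ M_pos) rate_level.
  by rewrite divr_ge0 ?ler0n ?subr_ge0 ?ltW.
have sum_level_ge : ((c * d0) ^ 2)%:R * (rate * #|F|%:R)
                      <= \sum_(k < (c * d0).+1) k%:R * \sum_(i | level i == k) s i.
  rewrite -sum_by_level ?sum_sign_level; last exact: level_le.
  rewrite natrX expr2 -mulrA mulrC ler_wpM2r ?ler0n // mulrA rate_level.
  exact: sum_sign_weight_expander (expand F dist).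
have [k k_range level_k] :=
  @exists_level_ge _ _ (fun k => \sum_(i | level i == k) s i) _ M_gt0 rateF_ge0 sum_level_ge.
exists k => //; rewrite DeterFlipE card_Fset_flip.
have -> : \sum_(i | p i == k%:R / (c * d0)%:R) s i = \sum_(i | level i == k) s i.
  apply: eq_bigl => i; rewrite p_level (inj_eq (mulIf _)) ?eqr_nat //.
  by rewrite invr_eq0 pnatr_eq0 -lt0n.
by rewrite mulrBl mul1r lerD2l lerN2.
Qed.

End DeterFlipProgress.

Theorem corollary4p2 (R : realFieldType) (n m c d d0 : nat) (alpha delta : R)
    (N : 'I_m -> d.-tuple 'I_n) (C0 : {set word d}) (x y : word n) :
  (0 < c)%N ->
  expander N c alpha delta ->
  linear_code C0 -> min_distance C0 d0 ->
  2 < d0%:R * delta ->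
  y \in tanner N C0 ->
  (dH x y)%:R <= alpha * n%:R ->
  let eps0 : R := d0%:R / 2 - delta^-1 in
  let t : R := d0%:R / 2 in
  exists q : R,
    (exists i : nat, (1 <= i <= c * d0)%N /\ q = i%:R / (c * d0)%:R) /\
    #|Fset (DeterFlip N c t C0 x q) y|%:R
      <= (1 - eps0 * delta / (2 * c%:R * t ^+ 2)) * #|Fset x y|%:R.
Proof.
move=> c_gt0 expand C0_lin [_ C0_dist] d0_delta y_code dist eps0 t.
have d0_gt0 : (0 < d0)%N.
  by rewrite lt0n; apply: contraTneq d0_delta => ->; rewrite mul0r ltNge ler0n.
have N_reg : regular N c by case: expand.
have C0_neq0 : C0 != set0 by apply/set0Pn; exists (zero_word d); case: C0_lin.
have [k k_range progress] :=
  DeterFlip_progress c_gt0 d0_gt0 N_reg C0_neq0 C0_dist y_code expand d0_delta dist.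
by exists (k%:R / (c * d0)%:R); split; first by exists k.
Qed.
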